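(* Let $X\subseteq\mathbb{R}^n$ be an $\ell_1$-convex set and $\lambda>0$. Then the set \[ X_\lambda=\bigcup\{\lambda(h+Q_n): h\in\mathbf{H}^n,\ \lambda(h+Q_n)\cap X\neq\emptyset\} \] is $\ell_1$-convex.
   Context: $Q_n=[-\tfrac12,\tfrac12]^n$ and $\mathbf{H}=\{m+\tfrac12: m\in\mathbb{Z}\}$ is the set of half-integers. A subset $Z\subseteq\mathbb{R}^n$ is $\ell_1$-convex if for all $z,z'\in Z$, with $D=\sum_i|z_i-z'_i|$, there is $\gamma\colon[0,D]\to Z$ with $\gamma(0)=z,\gamma(D)=z'$ and $\sum_i|\gamma_i(t)-\gamma_i(t')|=|t-t'|$ for all $t,t'$. *)

From mathcomp Require Import all_boot all_order all_algebra.
From mathcomp Require Import reals.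
Set Implicit Arguments. Unset Strict Implicit. Unset Printing Implicit Defensive.
Import Order.TTheory GRing.Theory Num.Theory.
Local Open Scope ring_scope.

Definition point (R : realType) (n : nat) := 'I_n -> R.

Definition l1dist (R : realType) (n : nat) (x y : point R n) : R :=
  \sum_(i < n) `|x i - y i|.

Definition l1_convex (R : realType) (n : nat) (Z : point R n -> Prop) : Prop :=
  forall z z' : point R n, Z z -> Z z' ->
    let D := l1dist z z' in
    exists gamma : R -> point R n,
      gamma 0 = z /\ gamma D = z' /\
      (forall t, 0 <= t <= D -> Z (gamma t)) /\
      (forall t t', 0 <= t <= D -> 0 <= t' <= D ->
         l1dist (gamma t) (gamma t') = `|t - t'|).

Definition half_int (R : realType) (x : R) : Prop :=
  exists m : int, x = m%:~R + 2^-1.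

Definition scaled_cube (R : realType) (n : nat) (lambda : R) (h : point R n)
  : point R n -> Prop :=
  fun x => exists q : point R n,
    (forall i, - 2^-1 <= q i <= 2^-1) /\ (forall i, x i = lambda * (h i + q i)).

Definition X_lambda (R : realType) (n : nat) (X : point R n -> Prop) (lambda : R)
  : point R n -> Prop :=
  fun x => exists h : point R n,
    (forall i, half_int (h i)) /\
    (exists y, scaled_cube lambda h y /\ X y) /\
    scaled_cube lambda h x.

From mathcomp Require Import all_boot all_order all_algebra.
From mathcomp Require Import reals boolp classical_sets topology normedtype.
From mathcomp Require Import ring lra.
Import Order.TTheory GRing.Theory Num.Theory.
Import numFieldNormedType.Exports.
Local Open Scope ring_scope.
Set Implicit Arguments. Unset Strict Implicit. Unset Printing Implicit Defensive.

(* Two reals share a cell if they lie in a common interval [lam k, lam (k + 1)]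
   with k an integer; a point is in X_lambda iff each of its coordinates shares
   a cell with the same coordinate of some point of X. Let x, x' in X_lambda
   correspond in this way to y, y' in X, and let gamma be an l1-geodesic from y
   to y' in X; its coordinates are monotone and 1-Lipschitz. In each coordinate
   build a monotone Lipschitz path from x_i to x'_i that keeps sharing a cell
   with gamma_i: if gamma_i moves in the direction from x_i to x'_i, follow
   gamma_i clamped to the segment between them; otherwise every point of that
   segment shares a cell with every value of gamma_i and the affine path works.
   The resulting path lies in X_lambda and has monotone coordinates, so its
   length is the l1 distance from x to x', and its arclength reparametrization
   is the required geodesic. *)

Section Cells.
Variable R : realType.
Implicit Types (lam p q s u a b : R) (k : int).

Definition in_cell lam k u := lam * k%:~R <= u /\ u <= lam * (k%:~R + 1).

Definition same_cell lam u s := exists k, in_cell lam k u /\ in_cell lam k s.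

Lemma same_cell_refl lam s : 0 < lam -> same_cell lam s s.
Proof.
move=> lam0; pose k := Num.floor (s / lam).
have lo := floor_le (s / lam); have hi := floorD1_gt (s / lam).
have e : s / lam * lam = s by rewrite divfK // gt_eqF.
rewrite intrD in hi.
suff c : in_cell lam k s by exists k.
by rewrite /in_cell; split; nra.
Qed.

Lemma same_cell_between lam a b u s :
  same_cell lam a s -> same_cell lam b s -> a <= u -> u <= b -> same_cell lam u s.
Proof.
move=> [k [[a1 a2] [s1 s2]]] [k' [[b1 b2] [s1' s2']]] au ub.
by case: (lerP u s) => us; [exists k | exists k']; split; split; lra.
Qed.

Lemma same_cell_opp lam u s : same_cell lam u s -> same_cell lam (- u) (- s).
Proof.
move=> [k [[u1 u2] [s1 s2]]]; exists (- k - 1).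
have e1 : lam * (- k - 1)%:~R = - (lam * (k%:~R + 1)) by rewrite intrB intrN; ring.
have e2 : lam * ((- k - 1)%:~R + 1) = - (lam * k%:~R) by rewrite intrB intrN; ring.
by rewrite /in_cell e1 e2; split; split; lra.
Qed.

Lemma same_cell_crossing lam p q a b u s : p <= q ->
  same_cell lam p a -> same_cell lam q b -> b <= s -> s <= a -> p <= u -> u <= q ->
  same_cell lam u s.
Proof.
move=> pq [k [[p1 p2] [a1 a2]]] [k' [[q1 q2] [b1 b2]]] bs sa pu uq.
by case: (lerP u s) => us; [exists k | exists k']; split; split; lra.
Qed.

Definition clamp p q s := Num.max p (Num.min s q).

Lemma clamp_ge p q s : p <= clamp p q s.
Proof. by rewrite /clamp le_max lexx. Qed.

Lemma clamp_le p q s : p <= q -> clamp p q s <= q.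
Proof. by rewrite /clamp ge_max => ->; rewrite ge_min lexx orbT. Qed.

Lemma clamp_id p q s : p <= s -> s <= q -> clamp p q s = s.
Proof. by move=> ps sq; rewrite /clamp min_l // max_r. Qed.

Lemma clamp_lo p q s : s <= p -> clamp p q s = p.
Proof. by move=> sp; rewrite /clamp max_l // ge_min sp. Qed.

Lemma clamp_hi p q s : p <= q -> q <= s -> clamp p q s = q.
Proof. by move=> pq qs; rewrite /clamp min_r // max_r. Qed.

Lemma clamp_nondecr p q s s' : s <= s' -> clamp p q s <= clamp p q s'.
Proof. by move=> ss'; rewrite /clamp le_max2 // le_min2. Qed.

Lemma clamp_dist p q s s' : `|clamp p q s - clamp p q s'| <= `|s - s'|.
Proof.
rewrite /clamp; have := ler_norm (s - s'); have := ler_norm (s' - s); rewrite distrC.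
by case: (leP p (Num.min s q)); case: (leP p (Num.min s' q));
  case: (leP s q); case: (leP s' q) => *; rewrite ?ler_norml; try apply/andP; split; lra.
Qed.

Lemma same_cell_clamp lam p q a b s : 0 < lam -> p <= q ->
  same_cell lam p a -> same_cell lam q b -> a <= s -> s <= b ->
  same_cell lam (clamp p q s) s.
Proof.
move=> lam0 pq [k [[p1 p2] [a1 a2]]] [k' [[q1 q2] [b1 b2]]] as_ sb.
have [sp|ps] := ltrP s p.
  by rewrite clamp_lo ?(ltW sp) //; exists k; split; split; lra.
have [qs|sq] := ltrP q s.
  by rewrite clamp_hi ?(ltW qs) //; exists k'; split; split; lra.
by rewrite clamp_id //; apply: same_cell_refl.
Qed.
End Cells.

Section CellPaths.
Variable R : realType.
Implicit Types (lam D K T p q : R) (f g v : R -> R).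

Definition lipschitz_with K f := forall s t, `|f s - f t| <= K * `|s - t|.

Definition nondecreasing_on T f :=
  forall s t, 0 <= s -> s <= t -> t <= T -> f s <= f t.

Definition nonincreasing_on T f :=
  forall s t, 0 <= s -> s <= t -> t <= T -> f t <= f s.

Definition monotone_on T f := nondecreasing_on T f \/ nonincreasing_on T f.

Definition nonexpansive_on T f :=
  forall s t, 0 <= s -> s <= T -> 0 <= t -> t <= T -> `|f s - f t| <= `|s - t|.

(* [v] runs over [0, D + 2] while [g] runs over [0, D]: [g] is started one time
   unit late and stopped one time unit early, leaving [v] time to leave its
   starting cell and to enter its final one. *)
Definition shadows lam D g v :=
  forall t, 0 <= t -> t <= D + 2 -> same_cell lam (v t) (g (clamp 0 D (t - 1))).

Lemma lipschitz_with_continuous K f : lipschitz_with K f -> continuous f.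
Proof.
move=> fK x; apply/cvgrPdist_lt => e e0.
have K1 : 0 < `|K| + 1 by rewrite ltr_pwDr.
apply/nbhs_ballP; exists (e / (`|K| + 1)); first by rewrite /= divr_gt0.
move=> y; rewrite /ball /= => xy; apply: le_lt_trans (fK x y) _.
have : (`|K| + 1) * `|x - y| < e by rewrite mulrC -ltr_pdivlMr.
have := ler_norm K; have : 0 <= `|x - y| by []; nra.
Qed.

Lemma lipschitz_with_cst K c : 0 <= K -> lipschitz_with K (fun=> c).
Proof. by move=> K0 s t; rewrite subrr normr0 mulr_ge0. Qed.

Lemma lipschitz_withD K1 K2 f g : lipschitz_with K1 f -> lipschitz_with K2 g ->
  lipschitz_with (K1 + K2) (fun t => f t + g t).
Proof.
move=> f_lip g_lip s t; rewrite opprD addrACA mulrDl.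
exact: le_trans (ler_normD _ _) (lerD (f_lip s t) (g_lip s t)).
Qed.

Lemma lipschitz_withMr K f c : lipschitz_with K f ->
  lipschitz_with (`|c| * K) (fun t => f t * c).
Proof. by move=> f_lip s t; rewrite -mulrBl normrM mulrC -mulrA ler_wpM2l. Qed.

Lemma lipschitz_with_shift K f c : lipschitz_with K f -> lipschitz_with K (fun t => f (t + c)).
Proof. by move=> f_lip s t; rewrite (_ : s - t = s + c - (t + c)) ?f_lip //; ring. Qed.

Lemma lipschitz_with_clamp p q : lipschitz_with 1 (clamp p q).
Proof. by move=> s t; rewrite mul1r clamp_dist. Qed.

Lemma cell_path_nondecr lam D p q g : 0 < lam -> 0 <= D -> p <= q ->
  nondecreasing_on D g -> nonexpansive_on D g ->
  same_cell lam p (g 0) -> same_cell lam q (g D) ->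
  exists v, [/\ v 0 = p, v (D + 2) = q, nondecreasing_on (D + 2) v,
    exists K, lipschitz_with K v & shadows lam D g v].
Proof.
move=> lam0 D0 pq g_up g_lip pg qg.
pose delay t := clamp 0 D (t - 1).
have delay_ge t : 0 <= delay t := clamp_ge _ _ _.
have delay_le t : delay t <= D := clamp_le _ D0.
pose w t := clamp p q (g (delay t)).
pose c0 := clamp p q (g 0); pose c1 := clamp p q (g D).
have pc0 : p <= c0 := clamp_ge _ _ _.
have c1q : c1 <= q := clamp_le _ pq.
have w0 t : t <= 1 -> w t = c0 by move=> t1; rewrite /w /delay [clamp 0 D _]clamp_lo //; lra.
have w1 t : 1 + D <= t -> w t = c1 by move=> t1; rewrite /w /delay [clamp 0 D _]clamp_hi //; lra.
have w_up s t : s <= t -> w s <= w t.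
  by move=> st; apply/clamp_nondecr/g_up => //; apply: clamp_nondecr; lra.
have w_lip : lipschitz_with 1 w.
  move=> s t; rewrite mul1r; apply: le_trans (clamp_dist _ _ _ _) _.
  apply: le_trans (g_lip _ _ _ _ _ _) _ => //; apply: le_trans (clamp_dist _ _ _ _) _.
  by rewrite opprB addrA subrK.
pose ramp (t : R) := clamp 0 1 t.
(* ramp from [p] to the clamped shadow of [g], follow it, then ramp to [q] *)
exists (fun t => p + ramp t * (c0 - p) + (w t - c0) + ramp (t - (1 + D)) * (q - c1)).
split.
- by rewrite w0 ?ler01 // /ramp clamp_id ?lexx ?ler01 // clamp_lo; [ring | lra].
- by rewrite w1 /ramp ?clamp_hi ?ler01 //; [ring | lra ..].
- move=> s t s0 st tD; have := w_up _ _ st.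
  have : ramp s <= ramp t by exact: clamp_nondecr.
  have : ramp (s - (1 + D)) <= ramp (t - (1 + D)) by apply: clamp_nondecr; lra.
  nra.
- eexists; repeat apply: lipschitz_withD;
    try exact: (lipschitz_with_cst _ (lexx 0)); try exact: w_lip;
    apply: lipschitz_withMr; try apply: lipschitz_with_shift; exact: lipschitz_with_clamp.
- have pc0g : same_cell lam c0 (g 0).
    by apply: (same_cell_clamp lam0 pq pg qg) => //; apply: g_up.
  have c1qg : same_cell lam c1 (g D).
    by apply: (same_cell_clamp lam0 pq pg qg) => //; apply: g_up.
  move=> t t0 tD.
  have [t1|t1] := lerP t 1.
    have -> : ramp t = t by rewrite /ramp clamp_id.
    have -> : ramp (t - (1 + D)) = 0 by rewrite /ramp clamp_lo //; lra.
    rewrite w0 // clamp_lo; last lra.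
    by apply: (same_cell_between pg pc0g); nra.
  have -> : ramp t = 1 by rewrite /ramp clamp_hi ?ler01 // ltW.
  have [t2|t2] := lerP t (1 + D).
    have -> : ramp (t - (1 + D)) = 0 by rewrite /ramp clamp_lo //; lra.
    rewrite (_ : _ + _ = w t); last ring.
    by apply: (same_cell_clamp lam0 pq pg qg); apply: g_up.
  rewrite w1 ?(ltW t2) // clamp_hi //; last lra.
  have r0 : 0 <= ramp (t - (1 + D)) := clamp_ge _ _ _.
  have r1 : ramp (t - (1 + D)) <= 1 := clamp_le _ ler01.
  by apply: (same_cell_between c1qg qg); nra.
Qed.

Lemma cell_path_nonincr lam D p q g : 0 <= D -> p <= q -> nonincreasing_on D g ->
  same_cell lam p (g 0) -> same_cell lam q (g D) ->
  exists v, [/\ v 0 = p, v (D + 2) = q, nondecreasing_on (D + 2) v,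
    exists K, lipschitz_with K v & shadows lam D g v].
Proof.
move=> D0 pq g_down pg qg; have D2 : 0 < D + 2 by lra.
exists (fun t => p + (q - p) * (t / (D + 2))); split.
- by rewrite mul0r mulr0 addr0.
- by rewrite divff ?gt_eqF // mulr1 addrC subrK.
- move=> s t s0 st tD; suff : s / (D + 2) <= t / (D + 2) by nra.
  by rewrite ler_pM2r // invr_gt0.
- exists (`|q - p| / (D + 2)) => s t.
  rewrite (_ : _ - _ = (q - p) * (s - t) / (D + 2)); last by field; rewrite gt_eqF.
  by rewrite !normrM normfV (gtr0_norm D2) mulrAC.
- move=> t t0 tD; have d0 := clamp_ge 0 D (t - 1); have dD := clamp_le (t - 1) D0.
  have f0 : 0 <= t / (D + 2) by rewrite divr_ge0 // ltW.
  have f1 : t / (D + 2) <= 1 by rewrite ler_pdivrMr // mul1r.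
  apply: (same_cell_crossing pq pg qg); [exact: g_down | exact: g_down | nra ..].
Qed.

Lemma cell_path_le lam D p q g : 0 < lam -> 0 <= D -> p <= q ->
  monotone_on D g -> nonexpansive_on D g ->
  same_cell lam p (g 0) -> same_cell lam q (g D) ->
  exists v, [/\ v 0 = p, v (D + 2) = q, nondecreasing_on (D + 2) v,
    exists K, lipschitz_with K v & shadows lam D g v].
Proof.
move=> lam0 D0 pq [g_up|g_down] g_lip pg qg.
  exact: cell_path_nondecr.
exact: cell_path_nonincr.
Qed.

Lemma cell_path lam D p q g : 0 < lam -> 0 <= D ->
  monotone_on D g -> nonexpansive_on D g ->
  same_cell lam p (g 0) -> same_cell lam q (g D) ->
  exists v, [/\ v 0 = p, v (D + 2) = q, monotone_on (D + 2) v,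
    exists K, lipschitz_with K v & shadows lam D g v].
Proof.
move=> lam0 D0 g_mono g_lip pg qg; have [pq|qp] := lerP p q.
  have [v [v0 v1 v_up v_lip v_cell]] := cell_path_le lam0 D0 pq g_mono g_lip pg qg.
  by exists v; split => //; left.
have g_mono' : monotone_on D (fun t => - g t).
  by case: g_mono => g_mono; [right | left] => s t s0 st tD; rewrite lerN2; apply: g_mono.
have g_lip' : nonexpansive_on D (fun t => - g t).
  by move=> s t *; rewrite -opprD normrN; apply: g_lip.
have pq' : - p <= - q by rewrite lerN2 ltW.
have [v [v0 v1 v_up [K v_lip] v_cell]] :=
  cell_path_le lam0 D0 pq' g_mono' g_lip' (same_cell_opp pg) (same_cell_opp qg).
exists (fun t => - v t); split; first by rewrite v0 opprK.
- by rewrite v1 opprK.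
- by right => s t s0 st tD; rewrite lerN2; apply: v_up.
- by exists K => s t; rewrite -opprD normrN.
by move=> t t0 tD; rewrite -[s in same_cell _ _ s]opprK; apply/same_cell_opp/v_cell.
Qed.
End CellPaths.

Section RealLine.
Variable R : realType.
Implicit Types (a b c T : R) (f : R -> R).

Lemma dist_add_between a b c : a <= b -> b <= c -> `|a - b| + `|b - c| = `|a - c|.
Proof.
move=> ab bc; have ac := le_trans ab bc.
by rewrite [`|a - b|]distrC [`|b - c|]distrC [`|a - c|]distrC !ger0_norm ?subr_ge0 //; ring.
Qed.

Lemma between_of_dist_add a b c :
  `|a - b| + `|b - c| = `|a - c| -> a <= c -> a <= b /\ b <= c.
Proof.
move=> E ac; rewrite [`|a - c|]distrC (ger0_norm (_ : 0 <= c - a)) ?subr_ge0 // in E.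
have ab := ler_norm (a - b); have ba := ler_norm (b - a).
have bc := ler_norm (b - c); have cb := ler_norm (c - b).
rewrite distrC in ba; rewrite distrC in cb.
by split; rewrite leNgt; apply/negP => ?; lra.
Qed.

Lemma dist_add_sym a b c :
  `|a - b| + `|b - c| = `|a - c| -> `|c - b| + `|b - a| = `|c - a|.
Proof. by rewrite addrC [`|c - b|]distrC [`|b - a|]distrC [`|c - a|]distrC. Qed.

Lemma monotone_dist_add T f s t : monotone_on T f -> 0 <= s -> s <= t -> t <= T ->
  `|f 0 - f s| + `|f s - f t| = `|f 0 - f t|.
Proof.
move=> [f_up|f_down] s0 st tT; have sT := le_trans st tT.
  by apply: dist_add_between; apply: f_up.
by apply: dist_add_sym; apply: dist_add_between; apply: f_down.
Qed.
End RealLine.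

Section L1.
Variables (R : realType) (n : nat).
Implicit Types (x y z : point R n) (D : R).

Definition l1_geodesic D (gam : R -> point R n) :=
  forall t t', 0 <= t <= D -> 0 <= t' <= D -> l1dist (gam t) (gam t') = `|t - t'|.

Lemma l1dist_ge0 x y : 0 <= l1dist x y.
Proof. exact: sumr_ge0. Qed.

Lemma l1distC x y : l1dist x y = l1dist y x.
Proof. by apply: eq_bigr => i _; rewrite distrC. Qed.

Lemma l1dist_eq0 x y : l1dist x y = 0 -> x = y.
Proof.
move=> E; apply: funext => i; apply/eqP; rewrite -subr_eq0 -normr_eq0.
by apply/eqP; apply: (psumr_eq0P _ E).
Qed.

Lemma ler_dist_l1dist x y i : `|x i - y i| <= l1dist x y.
Proof. by rewrite /l1dist (bigD1 i) //= lerDl sumr_ge0. Qed.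

Lemma l1dist_add_eq_coord x y z : l1dist x y + l1dist y z = l1dist x z ->
  forall i, `|x i - y i| + `|y i - z i| = `|x i - z i|.
Proof.
move=> E i; apply/eqP; rewrite -subr_eq0; apply/eqP; move: i isT.
apply: psumr_eq0P => [i _|]; first by rewrite subr_ge0 ler_distD.
by rewrite sumrB big_split /= E subrr.
Qed.

Lemma geodesic_coord_nonexpansive D gam i :
  l1_geodesic D gam -> nonexpansive_on D (fun t => gam t i).
Proof.
move=> geo s t s0 sD t0 tD; apply: le_trans (ler_dist_l1dist _ _ i) _.
by rewrite geo ?s0 ?sD ?t0 ?tD.
Qed.

Lemma geodesic_coord_monotone D gam i :
  l1_geodesic D gam -> monotone_on D (fun t => gam t i).
Proof.
move=> geo; pose g t := gam t i.
have g_add t1 t2 t3 : 0 <= t1 -> t1 <= t2 -> t2 <= t3 -> t3 <= D ->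
    `|g t1 - g t2| + `|g t2 - g t3| = `|g t1 - g t3|.
  move=> h1 h2 h3 h4; apply: l1dist_add_eq_coord.
  have t2D := le_trans h3 h4; have t1D := le_trans h2 t2D; have t3_0 := le_trans h1 (le_trans h2 h3).
  rewrite !geo ?h1 ?t1D ?(le_trans h1 h2) ?t2D ?t3_0 ?h4 //.
  by rewrite -(dist_add_between h2 h3) !(distrC t1) !(distrC t2).
have [g0D|gD0] := lerP (g 0) (g D); [left | right] => s t s0 st tD.
- have [g0t _] := between_of_dist_add (g_add 0 t D (lexx 0) (le_trans s0 st) tD (lexx D)) g0D.
  by have [] := between_of_dist_add (g_add 0 s t (lexx 0) s0 st tD) g0t.
- have E := dist_add_sym (g_add 0 t D (lexx 0) (le_trans s0 st) tD (lexx D)).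
  have [_ gt0] := between_of_dist_add E (ltW gD0).
  by have [] := between_of_dist_add (dist_add_sym (g_add 0 s t (lexx 0) s0 st tD)) gt0.
Qed.
End L1.

Section Reparametrization.
Variables (R : realType) (n : nat).
Implicit Types (x : point R n) (u : R -> point R n).

Lemma l1dist_monotone_path T u s t :
  (forall i, monotone_on T (fun t => u t i)) -> 0 <= s -> s <= t -> t <= T ->
  l1dist (u s) (u t) = l1dist (u 0) (u t) - l1dist (u 0) (u s).
Proof.
move=> mono s0 st tT; rewrite /l1dist -sumrB; apply: eq_bigr => i _.
by rewrite -(monotone_dist_add (mono i) s0 st tT); ring.
Qed.

Lemma lipschitz_with_l1dist x u (K : 'I_n -> R) :
  (forall i, lipschitz_with (K i) (fun t => u t i)) ->
  lipschitz_with (\sum_i K i) (fun t => l1dist x (u t)).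
Proof.
move=> lip s t; rewrite /l1dist -sumrB mulr_suml.
apply: le_trans (ler_norm_sum _ _ _) _; apply: ler_sum => i _.
apply: le_trans (ler_dist_dist _ _) _.
by rewrite opprB addrC addrA subrK distrC lip.
Qed.

Lemma geodesic_of_monotone_path (Z : point R n -> Prop) x x' T u :
  0 <= T -> u 0 = x -> u T = x' ->
  (forall i, monotone_on T (fun t => u t i)) ->
  (forall i, exists K, lipschitz_with K (fun t => u t i)) ->
  (forall t, 0 <= t -> t <= T -> Z (u t)) ->
  exists gamma : R -> point R n, gamma 0 = x /\ gamma (l1dist x x') = x' /\
    (forall t, 0 <= t <= l1dist x x' -> Z (gamma t)) /\
    l1_geodesic (l1dist x x') gamma.
Proof.
move=> T0 u0 uT mono lip inZ; set D := l1dist x x'.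
pose L t := l1dist x (u t).
have L_sub s t : 0 <= s -> s <= t -> t <= T -> l1dist (u s) (u t) = L t - L s.
  by rewrite /L -u0; apply: l1dist_monotone_path.
have [K lipK] := choice lip.
have L_cont : {within `[0, T], continuous L}%classic.
  exact/continuous_subspaceT/lipschitz_with_continuous/lipschitz_with_l1dist/lipK.
have L0 : L 0 = 0 by rewrite /L u0 /l1dist big1 // => i _; rewrite subrr normr0.
have D0 : 0 <= D := l1dist_ge0 x x'.
(* [c s] is a time at which the path has travelled the distance [s] *)
have c_ex s : exists cs, 0 <= s <= D -> 0 <= cs <= T /\ L cs = s.
  have [sD|] := boolP (0 <= s <= D); last by exists 0.
  have [|cs] := IVT T0 L_cont (v := s); first by rewrite L0 /L uT (min_l D0) (max_r D0).
  by rewrite in_itv /= => cT Lcs; exists cs.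
have [c c_spec] := choice c_ex.
have /c_spec [/andP[cD0 cDT] LcD] : 0 <= D <= D by rewrite D0 lexx.
exists (u \o c); split.
  have := c_spec 0; rewrite lexx D0 => /(_ isT) [_ Lc0].
  by symmetry; apply: l1dist_eq0.
split; first by apply: l1dist_eq0; rewrite /= -uT L_sub // LcD /L uT subrr.
split; first by move=> t /c_spec [/andP[ct0 ctT] _]; apply: inZ.
move=> s t /c_spec [/andP[cs0 csT] Lcs] /c_spec [/andP[ct0 ctT] Lct] /=.
wlog st : s t cs0 csT Lcs ct0 ctT Lct / c s <= c t.
  move=> sym; have [|/ltW] := lerP (c s) (c t); first exact: sym.
  by rewrite l1distC distrC; apply: sym.
rewrite L_sub // Lcs Lct distrC ger0_norm // -Lcs -Lct -L_sub //.
exact: l1dist_ge0.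
Qed.
End Reparametrization.

Section Cubes.
Variables (R : realType) (n : nat).
Implicit Types (lam : R) (h z w : point R n).

Lemma scaled_cube_same_cell lam h z w : 0 < lam -> (forall i, half_int (h i)) ->
  scaled_cube lam h z -> scaled_cube lam h w -> forall i, same_cell lam (z i) (w i).
Proof.
move=> lam0 h_half [q [q_bd zq]] [q' [q'_bd wq]] i.
rewrite zq wq; have [m ->] := h_half i; exists m.
have /andP[q1 q2] := q_bd i; have /andP[q1' q2'] := q'_bd i.
have half : 2^-1 + 2^-1 = 1 :> R by rewrite [RHS](splitr 1) mul1r.
by split; split; nra.
Qed.

Lemma same_cell_scaled_cube lam z w : 0 < lam ->
  (forall i, same_cell lam (z i) (w i)) ->
  exists h, [/\ forall i, half_int (h i), scaled_cube lam h z & scaled_cube lam h w].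
Proof.
move=> lam0 zw; have [k k_cell] := choice zw.
have half : 2^-1 + 2^-1 = 1 :> R by rewrite [RHS](splitr 1) mul1r.
pose h i := (k i)%:~R + 2^-1 : R.
have in_cube p : (forall i, in_cell lam (k i) (p i)) -> scaled_cube lam h p.
  move=> p_cell; exists (fun i => p i / lam - h i); split => i; last first.
    by rewrite addrC subrK mulrC divfK ?gt_eqF.
  have [p1 p2] := p_cell i; have e : p i / lam * lam = p i by rewrite divfK ?gt_eqF.
  rewrite /h; apply/andP; split; nra.
exists h; split; first by move=> i; exists (k i).
  by apply: in_cube => i; have [] := k_cell i.
by apply: in_cube => i; have [] := k_cell i.
Qed.

Lemma X_lambdaP (X : point R n -> Prop) lam z : 0 < lam ->
  X_lambda X lam z <-> exists2 y, X y & forall i, same_cell lam (z i) (y i).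
Proof.
move=> lam0; split.
  move=> [h [h_half [[y [yh Xy]] zh]]]; exists y => //.
  exact: scaled_cube_same_cell zh yh.
move=> [y Xy zy]; have [h [h_half zh yh]] := same_cell_scaled_cube lam0 zy.
by exists h; split => //; split => //; exists y.
Qed.
End Cubes.

Theorem proposition3p1 (R : realType) (n : nat) (X : point R n -> Prop) (lambda : R) :
  l1_convex X -> 0 < lambda -> l1_convex (X_lambda X lambda).
Proof.
move=> convX lam0 x x' /(X_lambdaP _ _ lam0) [y Xy xy] /(X_lambdaP _ _ lam0) [y' Xy' xy'].
have [gam [gam0 [gamD [gamX geo]]]] := convX y y' Xy Xy'.
set D := l1dist y y' in gamD gamX geo.
have D0 : 0 <= D := l1dist_ge0 y y'.
have coord_path i : exists v, [/\ v 0 = x i, v (D + 2) = x' i, monotone_on (D + 2) v,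
    exists K, lipschitz_with K v & shadows lambda D (fun t => gam t i) v].
  apply: cell_path lam0 D0 (geodesic_coord_monotone i geo)
    (geodesic_coord_nonexpansive i geo) _ _; first by rewrite gam0.
  by rewrite gamD.
have [V V_spec] := choice coord_path.
apply: (@geodesic_of_monotone_path _ _ _ _ _ (D + 2) (fun t i => V i t)); first lra.
- by apply: funext => i; have [] := V_spec i.
- by apply: funext => i; have [] := V_spec i.
- by move=> i; have [] := V_spec i.
- by move=> i; have [] := V_spec i.
move=> t t0 tD; apply/(X_lambdaP _ _ lam0); exists (gam (clamp 0 D (t - 1))).
  by apply: gamX; rewrite clamp_ge clamp_le.
by move=> i; have [_ _ _ _] := V_spec i; apply.
Qed.
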